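(* Let $r>0$ and let $Z$ be a set of homeomorphisms $[0,r)\to[0,r)$ such that (i) $(\alpha)z\ge\alpha$ for all $z\in Z$ and all $\alpha\in[0,r)$; (ii) $\mathrm{supp}(z)$ is an interval for every $z\in Z$; (iii) $\bigcup_{z\in Z}\mathrm{supp}(z)$ is dense in $(0,r)$. Let $f$ be a permutation of $[0,r)$ such that $f$ commutes with every $z\in Z$, $f$ is right-continuous at every point of $[0,r)$, and $f$ has only finitely many points of discontinuity. Then $f$ is continuous.
   Context: Maps act on the right. For a permutation $g$ of a set $S$, $\mathrm{fix}(g)$ is its set of fixed points and $\mathrm{supp}(g)=S\setminus\mathrm{fix}(g)$. *)

From Stdlib Require Import Reals List.
Open Scope R_scope.

Definition in_dom (r x : R) : Prop := 0 <= x < r.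

Definition maps_into (r : R) (f : R -> R) : Prop :=
  forall x, in_dom r x -> in_dom r (f x).

Definition perm_on (r : R) (f : R -> R) : Prop :=
  maps_into r f /\
  (forall x y, in_dom r x -> in_dom r y -> f x = f y -> x = y) /\
  (forall y, in_dom r y -> exists x, in_dom r x /\ f x = y).

Definition cont_at_on (r : R) (f : R -> R) (x : R) : Prop :=
  forall eps, 0 < eps -> exists delta, 0 < delta /\
    forall y, in_dom r y -> Rabs (y - x) < delta -> Rabs (f y - f x) < eps.

Definition right_cont_at_on (r : R) (f : R -> R) (x : R) : Prop :=
  forall eps, 0 < eps -> exists delta, 0 < delta /\
    forall y, in_dom r y -> x <= y -> y - x < delta -> Rabs (f y - f x) < eps.

Definition homeo_on (r : R) (z : R -> R) : Prop :=
  perm_on r z /\ (forall x, in_dom r x -> cont_at_on r z x) /\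
  exists g : R -> R, maps_into r g /\
    (forall x, in_dom r x -> g (z x) = x /\ z (g x) = x) /\
    (forall x, in_dom r x -> cont_at_on r g x).

(* supp(z) = [0,r) \ fix(z); maps act on the right, (a)z is written z a. *)
Definition supp (r : R) (z : R -> R) (a : R) : Prop := in_dom r a /\ z a <> a.

Definition is_interval (S : R -> Prop) : Prop :=
  forall a b c, S a -> S b -> a <= c <= b -> S c.

(* Suppose not and let d be the largest discontinuity. Continuity of f
   transports along each z in Z (f = z^-1 o f o z), so every z fixes d, and d > 0.
   The heart of the proof is an orbit argument: for y in the support of some z, the
   z-orbit of y increases to a fixed point p of z, and since f commutes with z the orbit
   of f y increases to the same p; if f is continuous at p this forces f p = p.
   Applied to support points just left of d (given by density) it yields points w
   close to d from the left with f w close to d; applied to z^-1, conjugated by the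
   reflection x |-> -x, it yields such points from the right. Right-continuity then
   gives f d = d, and since f is a continuous injection just left of d, it maps a left
   neighbourhood of d between two such witnesses: f is continuous at d, contradiction. *)

From Stdlib Require Import Reals List Lra Lia Classical Ranalysis5.
Open Scope R_scope.

(* Continuity at p of F restricted to an arbitrary set S; for S = [0,r) this is
   exactly [cont_at_on r], but orbit arguments are also run on the reflected set. *)
Definition cont_in (S : R -> Prop) (F : R -> R) (p : R) : Prop :=
  forall eps, 0 < eps -> exists delta, 0 < delta /\
    forall a, S a -> Rabs (a - p) < delta -> Rabs (F a - F p) < eps.

Lemma eq_of_close (a b : R) : (forall e, 0 < e -> Rabs (a - b) < e) -> a = b.
Proof.
  intros Hclose. destruct (Req_dec a b) as [|Hne]; [assumption|].
  assert (Hpos : 0 < Rabs (a - b)) by (apply Rabs_pos_lt; lra).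
  specialize (Hclose (Rabs (a - b)) Hpos). lra.
Qed.

Lemma cont_interior (r : R) (F : R -> R) (t : R) :
  0 < t < r -> cont_at_on r F t -> continuity_pt F t.
Proof.
  intros Ht Hc eps Heps.
  destruct (Hc eps Heps) as [delta [Hdelta Hnear]].
  exists (Rmin delta (Rmin t (r - t))). split.
  - apply Rmin_pos; [lra| apply Rmin_pos; lra].
  - intros a [_ Ha]. simpl in *. unfold R_dist in *.
    pose proof (Rmin_l delta (Rmin t (r - t))).
    pose proof (Rmin_r delta (Rmin t (r - t))).
    pose proof (Rmin_l t (r - t)). pose proof (Rmin_r t (r - t)).
    apply Rabs_def2 in Ha as Ha'.
    apply Hnear; [split|]; lra.
Qed.

Lemma ivt_between (F : R -> R) (a b c : R) : a <= b ->
  (forall t, a <= t <= b -> continuity_pt F t) ->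
  Rmin (F a) (F b) <= c <= Rmax (F a) (F b) -> exists t, a <= t <= b /\ F t = c.
Proof.
  intros Hab Hcont Hc.
  destruct (Req_dec c (F a)) as [Ea|Na]; [exists a; split; [lra| auto]|].
  destruct (Req_dec c (F b)) as [Eb|Nb]; [exists b; split; [lra| auto]|].
  assert (Hlt : a < b).
  { destruct (Rle_lt_or_eq_dec a b Hab) as [|<-]; [assumption|].
    exfalso. unfold Rmin, Rmax in Hc. destruct Rle_dec in Hc; lra. }
  unfold Rmin, Rmax in Hc. destruct Rle_dec in Hc.
  - destruct (IVT_interv (fun t => F t - c) a b) as [t [Ht Ft]]; try lra.
    + intros t Ht. apply continuity_pt_minus; [auto| apply continuity_pt_const; intros ??; auto].
    + exists t. split; [auto| lra].
  - destruct (IVT_interv (fun t => c - F t) a b) as [t [Ht Ft]]; try lra.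
    + intros t Ht. apply continuity_pt_minus; [apply continuity_pt_const; intros ??; auto| auto].
    + exists t. split; [auto| lra].
Qed.

(* A continuous injection on [a,b] maps the interior of [a,b] between F a and F b:
   otherwise one of the endpoint values would be attained a second time. *)
Lemma inj_cont_between (F : R -> R) (a b x : R) :
  (forall t, a <= t <= b -> continuity_pt F t) ->
  (forall u v, a <= u <= b -> a <= v <= b -> F u = F v -> u = v) ->
  a < x < b -> Rmin (F a) (F b) <= F x <= Rmax (F a) (F b).
Proof.
  intros Hcont Hinj Hx.
  assert (Hsub : forall u v, a <= u -> v <= b -> forall t, u <= t <= v -> continuity_pt F t)
    by (intros; apply Hcont; lra).
  assert (Hab : F a <> F b) by (intros E; apply Hinj in E; lra).
  unfold Rmin, Rmax; destruct Rle_dec; split; apply Rnot_lt_le; intros Hout.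
  - destruct (ivt_between F x b (F a)) as [t [Ht Et]]; [lra| apply Hsub; lra|
      unfold Rmin, Rmax; repeat destruct Rle_dec; lra|].
    apply Hinj in Et; lra.
  - destruct (ivt_between F a x (F b)) as [t [Ht Et]]; [lra| apply Hsub; lra|
      unfold Rmin, Rmax; repeat destruct Rle_dec; lra|].
    apply Hinj in Et; lra.
  - destruct (ivt_between F a x (F b)) as [t [Ht Et]]; [lra| apply Hsub; lra|
      unfold Rmin, Rmax; repeat destruct Rle_dec; lra|].
    apply Hinj in Et; lra.
  - destruct (ivt_between F x b (F a)) as [t [Ht Et]]; [lra| apply Hsub; lra|
      unfold Rmin, Rmax; repeat destruct Rle_dec; lra|].
    apply Hinj in Et; lra.
Qed.

Definition moved (S : R -> Prop) (h : R -> R) (a : R) : Prop := S a /\ h a <> a.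

Record orbit_setting (S : R -> Prop) (h f : R -> R) (B : R) : Prop := {
  os_h_stable : forall a, S a -> S (h a);
  os_f_stable : forall a, S a -> S (f a);
  os_h_ge : forall a, S a -> a <= h a;
  os_h_inj : forall a b, S a -> S b -> h a = h b -> a = b;
  os_f_inj : forall a b, S a -> S b -> f a = f b -> a = b;
  os_comm : forall a, S a -> f (h a) = h (f a);
  os_h_cont : forall p, S p -> cont_in S h p;
  os_moved_interval : is_interval (moved S h);
  os_moved_bound : forall a, moved S h a -> a <= B;
  os_up_closed : forall a p, S a -> a <= p <= B -> S p }.

Definition orbit (h : R -> R) (x : R) : R -> Prop := fun v => exists n, v = Nat.iter n h x.

Section Orbits.

Variables (S : R -> Prop) (h f : R -> R) (B : R).
Hypothesis HS : orbit_setting S h f B.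

Lemma moved_h (a : R) : moved S h a -> moved S h (h a).
Proof.
  intros [Sa Ha]. split; [apply (os_h_stable _ _ _ _ HS); auto|].
  intros E. apply (os_h_inj _ _ _ _ HS) in E; auto. apply (os_h_stable _ _ _ _ HS); auto.
Qed.

Lemma moved_f (a : R) : moved S h a -> moved S h (f a).
Proof.
  intros [Sa Ha]. split; [apply (os_f_stable _ _ _ _ HS); auto|].
  rewrite <- (os_comm _ _ _ _ HS) by auto. intros E.
  apply (os_f_inj _ _ _ _ HS) in E; auto. apply (os_h_stable _ _ _ _ HS); auto.
Qed.

Lemma moved_iter (x : R) (n : nat) : moved S h x -> moved S h (Nat.iter n h x).
Proof. intros Hx; induction n; simpl; auto using moved_h. Qed.

Lemma iter_mono (x : R) (n m : nat) : moved S h x -> (n <= m)%nat ->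
  Nat.iter n h x <= Nat.iter m h x.
Proof.
  intros Hx Hnm. induction Hnm as [|m _ IH]; [lra|].
  eapply Rle_trans; [apply IH|]. simpl.
  apply (os_h_ge _ _ _ _ HS), (moved_iter x m Hx).
Qed.

Lemma iter_comm (x : R) (n : nat) : S x -> f (Nat.iter n h x) = Nat.iter n h (f x).
Proof.
  intros Sx. induction n as [|n IH]; simpl; [reflexivity|].
  assert (Sn : S (Nat.iter n h x)).
  { clear IH. induction n; simpl; auto. apply (os_h_stable _ _ _ _ HS); auto. }
  rewrite (os_comm _ _ _ _ HS) by auto. congruence.
Qed.

Lemma orbit_sup_exists (x : R) : moved S h x -> exists p, is_lub (orbit h x) p.
Proof.
  intros Hx. destruct (completeness (orbit h x)) as [p Hp]; [| exists x, O; auto| eauto].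
  exists B. intros v [n ->]. apply (os_moved_bound _ _ _ _ HS), moved_iter, Hx.
Qed.

Lemma sup_approach (x p : R) : is_lub (orbit h x) p ->
  forall eps, 0 < eps -> exists n, p - eps < Nat.iter n h x.
Proof.
  intros [_ Hleast] eps Heps. apply NNPP. intros Hnone.
  assert (Hub : is_upper_bound (orbit h x) (p - eps)).
  { intros v [n ->]. apply Rnot_lt_le. intros Hlt. apply Hnone. exists n; lra. }
  apply Hleast in Hub. lra.
Qed.

(* The supremum of the orbit of a moved point x is fixed by h (by continuity of h),
   and therefore bounds the whole support interval containing x. *)
Lemma sup_fixed (x p : R) : moved S h x -> is_lub (orbit h x) p ->
  S p /\ h p = p /\ p <= B /\ (forall a, moved S h a -> a < p).
Proof.
  intros Hx Hp.
  assert (Hxp : x <= p) by (apply (proj1 Hp); exists O; auto).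
  assert (HpB : p <= B).
  { apply (proj2 Hp). intros v [n ->]. apply (os_moved_bound _ _ _ _ HS), moved_iter, Hx. }
  assert (Sp : S p) by (apply (os_up_closed _ _ _ _ HS x); [apply Hx| lra]).
  assert (Hfix : h p = p).
  { destruct (Rle_lt_or_eq_dec p (h p) (os_h_ge _ _ _ _ HS p Sp)) as [Hlt|]; [|auto].
    exfalso.
    destruct (os_h_cont _ _ _ _ HS p Sp (h p - p)) as [delta [Hdelta Hnear]]; [lra|].
    destruct (sup_approach x p Hp delta Hdelta) as [n Hn].
    assert (Hn1 : Nat.iter n h x <= p) by (apply (proj1 Hp); exists n; auto).
    assert (Hn2 : Nat.iter (Datatypes.S n) h x <= p)
      by (apply (proj1 Hp); exists (Datatypes.S n); auto).
    specialize (Hnear _ (proj1 (moved_iter x n Hx))).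
    apply Rabs_def2 in Hnear; [simpl in Hn2; lra|]. apply Rabs_def1; lra. }
  repeat split; auto.
  intros a Ha. apply Rnot_le_lt. intros Hpa.
  assert (Hpmoved : moved S h p) by (apply (os_moved_interval _ _ _ _ HS x a p Hx Ha); lra).
  apply (proj2 Hpmoved), Hfix.
Qed.

(* y and f y lie in the same support interval, so their orbits have the same supremum. *)
Lemma common_sup (y p : R) : moved S h y -> is_lub (orbit h y) p ->
  is_lub (orbit h (f y)) p.
Proof.
  intros Hy Hp. pose proof (moved_f y Hy) as Hfy.
  destruct (orbit_sup_exists (f y) Hfy) as [q Hq].
  destruct (sup_fixed y p Hy Hp) as (_ & _ & _ & Hbelow_p).
  destruct (sup_fixed (f y) q Hfy Hq) as (_ & _ & _ & Hbelow_q).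
  assert (Hpq : p <= q).
  { apply (proj2 Hp). intros v [n ->]. left. apply Hbelow_q, moved_iter, Hy. }
  assert (Hqp : q <= p).
  { apply (proj2 Hq). intros v [n ->]. left. apply Hbelow_p, moved_iter, Hfy. }
  replace p with q by lra. exact Hq.
Qed.

Lemma orbit_sup_approach (y p : R) : moved S h y -> is_lub (orbit h y) p ->
  forall eps, 0 < eps -> exists w, moved S h w /\ p - eps < w /\ p - eps < f w.
Proof.
  intros Hy Hp eps Heps.
  destruct (sup_approach y p Hp eps Heps) as [n1 H1].
  destruct (sup_approach (f y) p (common_sup y p Hy Hp) eps Heps) as [n2 H2].
  exists (Nat.iter (max n1 n2) h y). split; [apply moved_iter, Hy|].
  rewrite iter_comm by apply Hy. split.
  - eapply Rlt_le_trans; [apply H1| apply iter_mono; [exact Hy| lia]].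
  - eapply Rlt_le_trans; [apply H2| apply iter_mono; [apply moved_f, Hy| lia]].
Qed.

(* Either the supremum p of the orbit of y is below B, where
   continuity forces f p = p, or p = B and the approximation above applies. *)
Lemma orbit_witness (y : R) : moved S h y ->
  (forall t, S t -> y < t < B -> cont_in S f t) ->
  exists w, S w /\ y < w < B /\ y < f w < B.
Proof.
  intros Hy Hcont.
  destruct (orbit_sup_exists y Hy) as [p Hp].
  destruct (sup_fixed y p Hy Hp) as (Sp & _ & HpB & Hbelow).
  pose proof (Hbelow y Hy) as Hyp.
  pose proof (orbit_sup_approach y p Hy Hp) as Happrox.
  destruct (Rle_lt_or_eq_dec p B HpB) as [HltB|HeqB].
  - assert (Hfp : f p = p).
    { apply eq_of_close. intros e He.
      destruct (Hcont p Sp (conj Hyp HltB) (e / 2)) as [delta [Hdelta Hnear]]; [lra|].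
      destruct (Happrox (Rmin delta (e / 2))) as (w & Hw & Hw1 & Hw2); [apply Rmin_pos; lra|].
      pose proof (Rmin_l delta (e / 2)). pose proof (Rmin_r delta (e / 2)).
      pose proof (Hbelow w Hw). pose proof (Hbelow (f w) (moved_f w Hw)).
      specialize (Hnear w (proj1 Hw)). apply Rabs_def2 in Hnear; [|apply Rabs_def1; lra].
      apply Rabs_def1; lra. }
    exists p. rewrite Hfp. repeat split; [exact Sp| lra..].
  - destruct (Happrox (p - y)) as (w & Hw & Hw1 & Hw2); [lra|].
    pose proof (Hbelow w Hw). pose proof (Hbelow (f w) (moved_f w Hw)).
    exists w. repeat split; [apply Hw| lra..].
Qed.

End Orbits.

(* Continuity of f transports along any homeomorphism z commuting with f, because
   f = z^-1 o f o z. *)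
Lemma cont_transport (r : R) (z f : R -> R) (d : R) :
  homeo_on r z -> maps_into r f ->
  (forall a, in_dom r a -> f (z a) = z (f a)) ->
  in_dom r d -> cont_at_on r f (z d) -> cont_at_on r f d.
Proof.
  intros [[zm _] [zc [g [_ [gz gc]]]]] fm Hcomm Hd Hczd eps Heps.
  assert (Hconj : forall a, in_dom r a -> f a = g (f (z a))).
  { intros a Ha. rewrite Hcomm by auto. symmetry. apply gz, fm, Ha. }
  destruct (gc (f (z d)) (fm _ (zm _ Hd)) eps Heps) as [d1 [Hd1 H1]].
  destruct (Hczd d1 Hd1) as [d2 [Hd2 H2]].
  destruct (zc d Hd d2 Hd2) as [d3 [Hd3 H3]].
  exists d3. split; [exact Hd3|]. intros y Hy Hyd.
  rewrite (Hconj y Hy), (Hconj d Hd). apply H1; auto.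
Qed.

Lemma supp_bound_by_fixed (r : R) (z : R -> R) (d y a : R) :
  is_interval (supp r z) -> z d = d -> supp r z y -> supp r z a ->
  (y < d -> a < d) /\ (d < y -> d < a).
Proof.
  intros Hint Hfix Hy Ha.
  assert (Hnot : ~ supp r z d) by (intros [_ Hd]; auto).
  split; intros Hyd; apply Rnot_le_lt; intros Had; apply Hnot.
  - apply (Hint y a d Hy Ha). lra.
  - apply (Hint a y d Ha Hy). lra.
Qed.

Lemma forward_setting (r : R) (z f : R -> R) (d y : R) :
  homeo_on r z -> (forall a, in_dom r a -> z a >= a) -> is_interval (supp r z) ->
  perm_on r f -> (forall a, in_dom r a -> f (z a) = z (f a)) ->
  in_dom r d -> z d = d -> supp r z y -> y < d ->
  orbit_setting (in_dom r) z f d.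
Proof.
  intros [[zm [zinj _]] [zc _]] zge Hint [fm [finj _]] Hcomm Hd Hfix Hy Hyd.
  split; auto.
  - intros a Ha. apply Rge_le, zge, Ha.
  - intros a Ha. left. apply (supp_bound_by_fixed r z d y a); auto.
  - intros a p Ha Hp. destruct Ha, Hd. split; lra.
Qed.

(* Conjugation by x |-> -x, turning decreasing orbits into increasing ones. *)
Definition refl (F : R -> R) : R -> R := fun x => - F (- x).
Definition refl_dom (r : R) : R -> Prop := fun x => in_dom r (- x).

Lemma cont_refl (r : R) (F : R -> R) (p : R) :
  cont_in (in_dom r) F (- p) -> cont_in (refl_dom r) (refl F) p.
Proof.
  intros Hc eps Heps. destruct (Hc eps Heps) as [delta [Hdelta Hnear]].
  exists delta. split; [exact Hdelta|]. intros a Ha Hap. unfold refl.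
  replace (- F (- a) - - F (- p)) with (- (F (- a) - F (- p))) by ring.
  rewrite Rabs_Ropp. apply Hnear; [exact Ha|].
  replace (- a - - p) with (- (a - p)) by ring. rewrite Rabs_Ropp. exact Hap.
Qed.

Section Backward.

Variables (r : R) (z g f : R -> R).
Hypothesis zge : forall a, in_dom r a -> z a >= a.
Hypothesis gm : maps_into r g.
Hypothesis gz : forall x, in_dom r x -> g (z x) = x /\ z (g x) = x.
Hypothesis gc : forall x, in_dom r x -> cont_at_on r g x.
Hypothesis fm : maps_into r f.
Hypothesis finj : forall x y, in_dom r x -> in_dom r y -> f x = f y -> x = y.
Hypothesis Hcomm : forall a, in_dom r a -> f (z a) = z (f a).

Lemma inverse_le (u : R) : in_dom r u -> g u <= u.
Proof.
  intros Hu. pose proof (zge (g u) (gm u Hu)) as Hge.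
  rewrite (proj2 (gz u Hu)) in Hge. lra.
Qed.

Lemma inverse_comm (u : R) : in_dom r u -> f (g u) = g (f u).
Proof.
  intros Hu. pose proof (Hcomm (g u) (gm u Hu)) as E.
  rewrite (proj2 (gz u Hu)) in E. rewrite E. symmetry. apply gz, fm, gm, Hu.
Qed.

Lemma inverse_moved (u : R) : in_dom r u -> (g u <> u <-> z u <> u).
Proof.
  intros Hu. split; intros Hne E; apply Hne.
  - pose proof (proj1 (gz u Hu)) as G. rewrite E in G. exact G.
  - pose proof (proj2 (gz u Hu)) as G. rewrite E in G. exact G.
Qed.

Lemma refl_moved (a : R) : moved (refl_dom r) (refl g) a <-> supp r z (- a).
Proof.
  unfold moved, refl, refl_dom, supp.
  split; intros [Ha Hne]; split; auto.
  - apply (inverse_moved _ Ha). intros E. apply Hne. rewrite E. ring.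
  - apply (inverse_moved _ Ha) in Hne. intros E. apply Hne. lra.
Qed.

Lemma backward_setting (d y : R) :
  is_interval (supp r z) -> in_dom r d -> z d = d -> supp r z y -> d < y ->
  orbit_setting (refl_dom r) (refl g) (refl f) (- d).
Proof.
  intros Hint Hd Hfix Hy Hdy. unfold refl, refl_dom.
  split.
  - intros a Ha. rewrite Ropp_involutive. apply gm, Ha.
  - intros a Ha. rewrite Ropp_involutive. apply fm, Ha.
  - intros a Ha. pose proof (inverse_le _ Ha). lra.
  - intros a b Ha Hb E.
    assert (Hab : - a = - b).
    { rewrite <- (proj2 (gz _ Ha)), <- (proj2 (gz _ Hb)). f_equal. lra. }
    lra.
  - intros a b Ha Hb E. assert (- a = - b) by (apply finj; auto; lra). lra.
  - intros a Ha. rewrite !Ropp_involutive, inverse_comm by exact Ha. reflexivity.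
  - intros p Hp. apply cont_refl, gc, Hp.
  - intros a b c Ha Hb Hc.
    apply refl_moved in Ha, Hb. apply refl_moved.
    apply (Hint (- b) (- a)); auto. lra.
  - intros a Ha. apply refl_moved in Ha.
    pose proof (proj2 (supp_bound_by_fixed r z d y (- a) Hint Hfix Hy Ha) Hdy). lra.
  - intros a p Ha Hp. destruct Ha, Hd. split; lra.
Qed.

End Backward.

Lemma finite_max (P : R -> Prop) (l : list R) :
  (forall x, P x -> In x l) -> (exists x, P x) -> exists m, P m /\ forall y, P y -> y <= m.
Proof.
  revert P. induction l as [|a l IH]; intros P Hcover [x Px].
  - destruct (Hcover x Px).
  - destruct (classic (exists x, P x /\ x <> a)) as [Hother|Honly].
    + destruct (IH (fun x => P x /\ x <> a)) as [m [[Pm _] Hm]]; [|exact Hother|].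
      { intros y [Py Hya]. destruct (Hcover y Py) as [E|]; [congruence| assumption]. }
      destruct (classic (P a /\ m < a)) as [[Pa Hma]|Hnot].
      * exists a. split; [exact Pa|]. intros y Py.
        destruct (Req_dec y a) as [->|Hya]; [lra|]. pose proof (Hm y (conj Py Hya)). lra.
      * exists m. split; [exact Pm|]. intros y Py.
        destruct (Req_dec y a) as [->|Hya]; [|apply Hm; auto].
        apply Rnot_lt_le. intros Hlt. apply Hnot. auto.
    + assert (Hx : x = a) by (apply NNPP; intros Hxa; apply Honly; eauto). subst x.
      exists a. split; [exact Px|]. intros y Py.
      assert (y = a) by (apply NNPP; intros Hya; apply Honly; eauto). lra.
Qed.

Lemma list_gap (l : list R) (d : R) :
  exists delta, 0 < delta /\ forall y, In y l -> ~ (d - delta < y < d).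
Proof.
  induction l as [|a l [delta [Hdelta Hgap]]].
  - exists 1. split; [lra| intros y []].
  - destruct (Rlt_le_dec a d) as [Had|Hda].
    + exists (Rmin delta (d - a)). split; [apply Rmin_pos; lra|].
      pose proof (Rmin_l delta (d - a)). pose proof (Rmin_r delta (d - a)).
      intros y [<-|Hy] Hyd; [lra|]. apply (Hgap y Hy). lra.
    + exists delta. split; [exact Hdelta|].
      intros y [<-|Hy] Hyd; [lra| apply (Hgap y Hy); exact Hyd].
Qed.

Lemma cont_at_zero (r : R) (f : R -> R) : right_cont_at_on r f 0 -> cont_at_on r f 0.
Proof.
  intros Hrc eps Heps. destruct (Hrc eps Heps) as [delta [Hdelta Hnear]].
  exists delta. split; [exact Hdelta|]. intros y Hy Hyd.
  apply Rabs_def2 in Hyd. destruct Hy. apply Hnear; [split| |]; lra.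
Qed.

Section Witnesses.

Variables (r : R) (Z : (R -> R) -> Prop) (f : R -> R).
Hypothesis Hhom : forall z, Z z -> homeo_on r z.
Hypothesis Hge : forall z, Z z -> forall a, in_dom r a -> z a >= a.
Hypothesis Hint : forall z, Z z -> is_interval (supp r z).
Hypothesis Hdense : forall x eps, 0 < x < r -> 0 < eps ->
  exists z y, Z z /\ supp r z y /\ Rabs (y - x) < eps.
Hypothesis Hperm : perm_on r f.
Hypothesis Hcomm : forall z, Z z -> forall a, in_dom r a -> f (z a) = z (f a).

(* Every z in Z fixes the largest discontinuity d: otherwise z d > d is a continuity
   point, and continuity would transport back to d. *)
Lemma discontinuity_fixed (d : R) : in_dom r d -> ~ cont_at_on r f d ->
  (forall t, in_dom r t -> d < t -> cont_at_on r f t) -> forall z, Z z -> z d = d.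
Proof.
  intros Hd Hnd Habove z Zz.
  destruct (Hhom z Zz) as [[zm _] _].
  destruct (Rge_gt_or_eq_dec _ _ (Hge z Zz d Hd)) as [Hgt|]; [exfalso|assumption].
  apply Hnd, (cont_transport r z f d (Hhom z Zz) (proj1 Hperm) (Hcomm z Zz) Hd).
  apply Habove; [apply zm, Hd| lra].
Qed.

(* Near a common fixed point d > 0, left of which f is continuous, there are points w
   just below d with f w just below d (density provides a support point to start from). *)
Lemma left_witness (d delta : R) : in_dom r d -> 0 < d -> 0 < delta ->
  (forall z, Z z -> z d = d) -> (forall t, d - delta < t < d -> cont_at_on r f t) ->
  forall eps, 0 < eps -> exists w, d - eps < w < d /\ d - eps < f w < d.
Proof.
  intros Hd Hdpos Hdelta Hfix Hcont eps Heps.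
  set (e := Rmin eps (Rmin delta d)).
  assert (He : 0 < e) by (apply Rmin_pos; [lra| apply Rmin_pos; lra]).
  assert (He1 : e <= eps) by apply Rmin_l.
  assert (He2 : e <= delta) by (eapply Rle_trans; [apply Rmin_r| apply Rmin_l]).
  assert (He3 : e <= d) by (eapply Rle_trans; [apply Rmin_r| apply Rmin_r]).
  destruct (Hdense (d - e / 2) (e / 2)) as (z & y & Zz & Hy & Hyx); [destruct Hd; lra| lra|].
  apply Rabs_def2 in Hyx.
  pose proof (forward_setting r z f d y (Hhom z Zz) (Hge z Zz) (Hint z Zz) Hperm
    (Hcomm z Zz) Hd (Hfix z Zz) Hy ltac:(lra)) as Hset.
  destruct (orbit_witness _ _ _ _ Hset y Hy) as (w & _ & Hw & Hfw).
  - intros t _ Ht. apply Hcont. lra.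
  - exists w. split; lra.
Qed.

(* Symmetrically, right of a common fixed point d beyond which f is continuous, there
   are points w just above d with f w just above d, obtained from backward orbits. *)
Lemma right_witness (d : R) : in_dom r d -> (forall z, Z z -> z d = d) ->
  (forall t, in_dom r t -> d < t -> cont_at_on r f t) ->
  forall eps, 0 < eps -> exists w, in_dom r w /\ d < w < d + eps /\ d < f w < d + eps.
Proof.
  intros Hd Hfix Hcont eps Heps.
  set (e := Rmin eps (r - d)).
  assert (He : 0 < e) by (apply Rmin_pos; destruct Hd; lra).
  assert (He1 : e <= eps) by apply Rmin_l.
  assert (He2 : e <= r - d) by apply Rmin_r.
  destruct (Hdense (d + e / 2) (e / 2)) as (z & y & Zz & Hy & Hyx); [destruct Hd; lra| lra|].
  apply Rabs_def2 in Hyx.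
  destruct (Hhom z Zz) as [_ [_ [g [gm [gz gc]]]]].
  destruct Hperm as [fm [finj _]].
  pose proof (backward_setting r z g f (Hge z Zz) gm gz gc fm finj (Hcomm z Zz) d y
    (Hint z Zz) Hd (Hfix z Zz) Hy ltac:(lra)) as Hset.
  assert (Hy' : moved (refl_dom r) (refl g) (- y)).
  { apply (refl_moved r z g gz). rewrite Ropp_involutive. exact Hy. }
  destruct (orbit_witness _ _ _ _ Hset (- y) Hy') as (w & Hw & Hwy & Hfw).
  - intros t Ht Hty. apply cont_refl, Hcont; [exact Ht| lra].
  - unfold refl, refl_dom in *. exists (- w). split; [exact Hw| split; lra].
Qed.

End Witnesses.

Lemma fixed_of_right_witness (r : R) (f : R -> R) (d : R) :
  right_cont_at_on r f d ->
  (forall eps, 0 < eps -> exists w, in_dom r w /\ d < w < d + eps /\ d < f w < d + eps) ->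
  f d = d.
Proof.
  intros Hrc Hwit. apply eq_of_close. intros e He.
  destruct (Hrc (e / 2) ltac:(lra)) as [delta [Hdelta Hnear]].
  destruct (Hwit (Rmin (e / 2) delta)) as (w & Hw & Hwd & Hfw); [apply Rmin_pos; lra|].
  pose proof (Rmin_l (e / 2) delta). pose proof (Rmin_r (e / 2) delta).
  specialize (Hnear w Hw ltac:(lra) ltac:(lra)). apply Rabs_def2 in Hnear.
  apply Rabs_def1; lra.
Qed.

(* If f d = d, f is right-continuous at d and continuous just left of d, left witnesses
   give continuity at d: by injectivity, f maps (w1, w2) between f w1 and f w2. *)
Lemma cont_of_left_witness (r : R) (f : R -> R) (d delta : R) :
  in_dom r d -> 0 < delta <= d -> perm_on r f -> f d = d -> right_cont_at_on r f d ->
  (forall t, d - delta < t < d -> cont_at_on r f t) ->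
  (forall eps, 0 < eps -> exists w, d - eps < w < d /\ d - eps < f w < d) ->
  cont_at_on r f d.
Proof.
  intros Hd Hdelta [_ [finj _]] Hfd Hrc Hcont Hwit eps Heps.
  destruct (Hrc eps Heps) as [deltaR [HdeltaR HnearR]].
  destruct (Hwit (Rmin eps delta)) as (w1 & Hw1 & Hfw1); [apply Rmin_pos; lra|].
  pose proof (Rmin_l eps delta). pose proof (Rmin_r eps delta).
  exists (Rmin deltaR (d - w1)). split; [apply Rmin_pos; lra|].
  pose proof (Rmin_l deltaR (d - w1)). pose proof (Rmin_r deltaR (d - w1)).
  intros y Hy Hyd. apply Rabs_def2 in Hyd.
  destruct (Rle_lt_dec d y) as [Hdy|Hyd'].
  - apply HnearR; auto; lra.
  - destruct (Hwit (Rmin eps (d - y))) as (w2 & Hw2 & Hfw2); [apply Rmin_pos; lra|].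
    pose proof (Rmin_l eps (d - y)). pose proof (Rmin_r eps (d - y)).
    assert (Hbetween : Rmin (f w1) (f w2) <= f y <= Rmax (f w1) (f w2)).
    { apply inj_cont_between; [| | lra].
      - intros t Ht. apply (cont_interior r); [destruct Hd; lra| apply Hcont; lra].
      - intros u v Hu Hv. apply finj; destruct Hd; split; lra. }
    rewrite Hfd. unfold Rmin, Rmax in Hbetween. destruct Rle_dec in Hbetween;
      apply Rabs_def1; lra.
Qed.

Theorem lemma3p2 (r : R) (Z : (R -> R) -> Prop) (f : R -> R) :
  0 < r ->
  (forall z, Z z -> homeo_on r z) ->
  (* (i) *)
  (forall z, Z z -> forall a, in_dom r a -> z a >= a) ->
  (* (ii) *)
  (forall z, Z z -> is_interval (supp r z)) ->
  (* (iii) the union of supports is dense in (0,r) *)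
  (forall x eps, 0 < x < r -> 0 < eps ->
     exists z y, Z z /\ supp r z y /\ Rabs (y - x) < eps) ->
  perm_on r f ->
  (forall z, Z z -> forall a, in_dom r a -> f (z a) = z (f a)) ->
  (forall x, in_dom r x -> right_cont_at_on r f x) ->
  (exists l : list R, forall x, in_dom r x -> ~ cont_at_on r f x -> In x l) ->
  forall x, in_dom r x -> cont_at_on r f x.
Proof.
  intros _ Hhom Hge Hint Hdense Hperm Hcomm Hrc [l Hl] x Hx.
  apply NNPP. intros Hnx.
  destruct (finite_max (fun t => in_dom r t /\ ~ cont_at_on r f t) l)
    as (d & [Hd Hnd] & Hmax); [intros t [Ht Hnt]; auto| eauto|].
  assert (Habove : forall t, in_dom r t -> d < t -> cont_at_on r f t).
  { intros t Ht Hdt. apply NNPP. intros Hnt. pose proof (Hmax t (conj Ht Hnt)). lra. }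
  pose proof (discontinuity_fixed r Z f Hhom Hge Hperm Hcomm d Hd Hnd Habove) as Hfix.
  assert (Hdpos : 0 < d).
  { destruct Hd as [Hd0 Hdr]. destruct (Rle_lt_or_eq_dec 0 d Hd0) as [|Hd0']; [auto|].
    subst d. exfalso. apply Hnd, cont_at_zero, Hrc. split; lra. }
  destruct (list_gap l d) as (gap & Hgap & Hnone).
  pose proof (Rmin_l gap d). pose proof (Rmin_r gap d).
  assert (Hbelow : forall t, d - Rmin gap d < t < d -> cont_at_on r f t).
  { intros t Ht. apply NNPP. intros Hnt.
    apply (Hnone t); [apply Hl; [destruct Hd; split; lra| exact Hnt]| lra]. }
  apply Hnd, (cont_of_left_witness r f d (Rmin gap d)); auto.
  - split; [apply Rmin_pos|]; lra.
  - apply (fixed_of_right_witness r); auto.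
    apply (right_witness r Z f Hhom Hge Hint Hdense Hperm Hcomm); auto.
  - apply (left_witness r Z f Hhom Hge Hint Hdense Hperm Hcomm d (Rmin gap d)); auto.
    apply Rmin_pos; lra.
Qed.
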